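(* Let $g$ be a Morse isometry of a proper geodesic space $X$ with poles $g^+,g^-$. Then for every point $x\in X$, $g^n(x)\to g^+$ and $g^{-n}(x)\to g^-$ as $n\to+\infty$.
   Context: A Morse gauge is a function $N:[1,\infty)\times[0,\infty)\to[0,\infty)$; a (quasi-)geodesic $\gamma$ is $N$-Morse if every $(\lambda,\epsilon)$-quasi-geodesic with endpoints on $\gamma$ lies in the $N(\lambda,\epsilon)$-neighborhood of $\gamma$. $\partial_M X$ is the set of Morse geodesic rays modulo finite Hausdorff distance; isometries act by $[\alpha]\mapsto[g\circ\alpha]$. With $x_0\in X$ and $x_n=g^n(x_0)$, an isometry $g$ is Morse if there are a Morse gauge $N$ and geodesics $[x_i,x_{i+1}]$ whose bi-infinite concatenation is an $N$-Morse quasi-geodesic. A Morse isometry has exactly two fixed points in $\partial_M X$, its poles $g^+$ and $g^-$ (the endpoints of a Morse bi-infinite geodesic at finite Hausdorff distance from this concatenation, $g^+$ corresponding to the direction $n\to+\infty$ and $g^-$ to $n\to-\infty$). For $y_n\in X$ and $p\in\partial_M X$, $y_n\to p$ means: for a (equivalently any) basepoint $x$, there exist a Morse gauge $N$ and $N$-Morse geodesics $[x,y_n]$ such that every subsequence of $([x,y_n])$ has a further subsequence converging uniformly on compact sets to a geodesic ray $\gamma$ with $\gamma(0)=x$ and $[\gamma]=p$. *)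

From Stdlib Require Import Reals ZArith.
Open Scope R_scope.

Record MetricSpace := {
  pt :> Type;
  dist : pt -> pt -> R;
  dist_nonneg : forall x y, 0 <= dist x y;
  dist_eq0 : forall x y, dist x y = 0 <-> x = y;
  dist_sym : forall x y, dist x y = dist y x;
  dist_tri : forall x y z, dist x z <= dist x y + dist y z
}.

Arguments dist {m} _ _.

Section Morse.
Variable X : MetricSpace.

Definition strict_incr (phi : nat -> nat) : Prop :=
  forall m n, (m < n)%nat -> (phi m < phi n)%nat.

Definition seq_converges (u : nat -> X) (l : X) : Prop :=
  forall eps, 0 < eps -> exists K, forall k, (K <= k)%nat -> dist (u k) l <= eps.

Definition proper_space : Prop :=
  forall (x : X) (r : R) (u : nat -> X), (forall n, dist x (u n) <= r) ->
    exists phi l, strict_incr phi /\ dist x l <= r /\ seq_converges (fun k => u (phi k)) l.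

Definition geodesic_on (I : R -> Prop) (c : R -> X) : Prop :=
  forall s t, I s -> I t -> dist (c s) (c t) = Rabs (s - t).

Definition geodesic_space : Prop :=
  forall x y : X, exists c : R -> X,
    geodesic_on (fun t => 0 <= t <= dist x y) c /\ c 0 = x /\ c (dist x y) = y.

Definition quasi_geodesic_on (lam eps : R) (I : R -> Prop) (q : R -> X) : Prop :=
  forall s t, I s -> I t ->
    / lam * Rabs (s - t) - eps <= dist (q s) (q t) <= lam * Rabs (s - t) + eps.

Definition gauge := R -> R -> R.

Definition is_N_Morse (N : gauge) (I : R -> Prop) (c : R -> X) : Prop :=
  forall (lam eps a b : R) (q : R -> X),
    1 <= lam -> 0 <= eps -> a <= b ->
    quasi_geodesic_on lam eps (fun t => a <= t <= b) q ->
    (exists s, I s /\ q a = c s) ->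
    (exists s, I s /\ q b = c s) ->
    forall t, a <= t <= b -> exists s, I s /\ dist (q t) (c s) <= N lam eps.

Definition nonneg_half (t : R) : Prop := 0 <= t.
Definition whole_line (t : R) : Prop := True.

Definition geodesic_ray (c : R -> X) : Prop := geodesic_on nonneg_half c.

(** Morse geodesic rays: representatives of points of the Morse boundary. *)
Definition Morse_ray (c : R -> X) : Prop :=
  geodesic_ray c /\ exists N, is_N_Morse N nonneg_half c.

Definition finite_hausdorff (I1 : R -> Prop) (c1 : R -> X)
    (I2 : R -> Prop) (c2 : R -> X) : Prop :=
  exists C, (forall s, I1 s -> exists t, I2 t /\ dist (c1 s) (c2 t) <= C) /\
            (forall t, I2 t -> exists s, I1 s /\ dist (c1 s) (c2 t) <= C).

Definition same_boundary_point (c1 c2 : R -> X) : Prop :=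
  finite_hausdorff nonneg_half c1 nonneg_half c2.

Definition unif_cvg_compacts (beta : nat -> R -> X) (len : nat -> R)
    (gam : R -> X) : Prop :=
  forall T eps, 0 < eps -> exists K, forall k, (K <= k)%nat ->
    T <= len k /\ forall t, 0 <= t <= T -> dist (beta k t) (gam t) <= eps.

Definition converges_to_boundary (y : nat -> X) (p : R -> X) : Prop :=
  exists (x : X) (N : gauge) (beta : nat -> R -> X),
    (forall n, geodesic_on (fun t => 0 <= t <= dist x (y n)) (beta n) /\
               beta n 0 = x /\ beta n (dist x (y n)) = y n /\
               is_N_Morse N (fun t => 0 <= t <= dist x (y n)) (beta n)) /\
    forall phi, strict_incr phi ->
      exists psi gam, strict_incr psi /\ geodesic_ray gam /\ gam 0 = x /\
        same_boundary_point gam p /\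
        unif_cvg_compacts (fun k => beta (phi (psi k)))
                          (fun k => dist x (y (phi (psi k)))) gam.

Definition isometry (g : X -> X) : Prop := forall x y, dist (g x) (g y) = dist x y.

Definition zpow (g ginv : X -> X) (n : Z) (x : X) : X :=
  match n with
  | Z0 => x
  | Zpos p => Nat.iter (Pos.to_nat p) g x
  | Zneg p => Nat.iter (Pos.to_nat p) ginv x
  end.

Definition Morse_concatenation (g ginv : X -> X) (x0 : X) (N : gauge)
    (c : Z -> R -> X) (Gam : R -> X) : Prop :=
  let L := dist x0 (g x0) in
  0 < L /\
  (forall i : Z, geodesic_on (fun t => 0 <= t <= L) (c i) /\
                 c i 0 = zpow g ginv i x0 /\ c i L = zpow g ginv (i + 1) x0) /\
  (forall (i : Z) t, 0 <= t <= L -> Gam (IZR i * L + t) = c i t) /\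
  (exists lam eps, 1 <= lam /\ 0 <= eps /\ quasi_geodesic_on lam eps whole_line Gam) /\
  is_N_Morse N whole_line Gam.

Definition Morse_isometry (g ginv : X -> X) : Prop :=
  exists x0 N c Gam, Morse_concatenation g ginv x0 N c Gam.

(** [gp] and [gm] represent the poles g^+ and g^-: they are the two ends of a
    Morse bi-infinite geodesic [gam] at finite Hausdorff distance from the
    concatenation, with gam(t), t -> +oo, corresponding to n -> +oo. *)
Definition poles (g ginv : X -> X) (gp gm : R -> X) : Prop :=
  exists x0 N c Gam (gam : R -> X),
    Morse_concatenation g ginv x0 N c Gam /\
    geodesic_on whole_line gam /\ (exists N', is_N_Morse N' whole_line gam) /\
    finite_hausdorff whole_line gam whole_line Gam /\
    finite_hausdorff nonneg_half gam nonneg_half Gam /\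
    Morse_ray gp /\ same_boundary_point gp gam /\
    Morse_ray gm /\ same_boundary_point gm (fun t => gam (- t)).

End Morse.

(* The orbit [g^n x] stays within [d(x, x0)] of the vertex [Gam (n L)] of the Morse
   axis [Gam]. By the Morse property, geodesics [beta_n] from [Gam 0] to [g^n x]
   stay uniformly close to [Gam]; conversely, as the shadow of [beta_n] on [Gam]
   moves coarsely continuously from near [0] to near [n L], the piece of [Gam]
   between them stays close to [beta_n]. Together these make the [beta_n]
   uniformly Morse. Properness and Arzela-Ascoli give subsequences converging on
   compact sets to a geodesic ray, which inherits finite Hausdorff distance to the
   positive half of [Gam], i.e. represents [g^+]. The reversed axis gives [g^-]. *)

From Stdlib Require Import Reals ZArith Lra Lia Classical ClassicalEpsilon Cantor.
Open Scope R_scope.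

Lemma Rabs_le_between (a b : R) : Rabs a <= b -> - b <= a <= b.
Proof. unfold Rabs; destruct Rcase_abs; lra. Qed.

Definition coarsely_continuous (f : R -> R) (a b J : R) : Prop :=
  forall t t', a <= t <= b -> a <= t' <= b -> Rabs (t - t') <= 1 -> Rabs (f t - f t') <= J.

Lemma coarsely_continuous_sub (f : R -> R) (a b a' b' J : R) :
  a <= a' -> b' <= b -> coarsely_continuous f a b J -> coarsely_continuous f a' b' J.
Proof. intros Ha Hb Hf t t' Ht Ht'; apply Hf; lra. Qed.

Lemma coarse_ivt_steps (f : R -> R) (b J : R) (n : nat) : forall a,
  b - a <= INR n -> a <= b -> coarsely_continuous f a b J ->
  forall w, f a <= w <= f b \/ f b <= w <= f a ->
  exists t, a <= t <= b /\ Rabs (f t - w) <= J.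
Proof.
  induction n as [|n IH]; intros a Hn Hab Hf w Hw.
  - simpl in Hn. assert (a = b) by lra. subst a.
    exists b. split; [lra|].
    assert (Hb := Hf b b ltac:(lra) ltac:(lra) ltac:(rewrite Rminus_diag, Rabs_R0; lra)).
    rewrite Rminus_diag, Rabs_R0 in Hb. replace w with (f b) by lra.
    rewrite Rminus_diag, Rabs_R0. exact Hb.
  - destruct (Rle_dec (b - a) 1) as [Hshort|Hlong].
    + assert (Hab' := Hf a b ltac:(lra) ltac:(lra) ltac:(rewrite Rabs_left1; lra)).
      apply Rabs_le_between in Hab'.
      exists a. split; [lra|]. apply Rabs_le. lra.
    + assert (Hstep := Hf a (a + 1) ltac:(lra) ltac:(lra) ltac:(rewrite Rabs_left1; lra)).
      apply Rabs_le_between in Hstep.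
      destruct (classic (f a <= w <= f (a + 1) \/ f (a + 1) <= w <= f a)) as [Hin|Hout].
      * exists a. split; [lra|]. apply Rabs_le. lra.
      * destruct (IH (a + 1)) with (w := w) as [t [Ht Htw]].
        -- rewrite S_INR in Hn. lra.
        -- lra.
        -- exact (coarsely_continuous_sub f a b (a + 1) b J ltac:(lra) ltac:(lra) Hf).
        -- apply not_or_and in Hout as [H1 H2].
           apply not_and_or in H1. apply not_and_or in H2. lra.
        -- exists t. split; [lra|exact Htw].
Qed.

Lemma coarse_ivt (f : R -> R) (a b J : R) : a <= b -> coarsely_continuous f a b J ->
  forall w, f a <= w <= f b \/ f b <= w <= f a ->
  exists t, a <= t <= b /\ Rabs (f t - w) <= J.
Proof.
  intros Hab Hf. destruct (INR_unbounded (b - a)) as [n Hn].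
  apply (coarse_ivt_steps f b J n); [lra|exact Hab|exact Hf].
Qed.

Lemma guarded_choice (A : Type) (P : A -> Prop) (Q : A -> R -> Prop) :
  (forall a, P a -> exists s, Q a s) -> exists f : A -> R, forall a, P a -> Q a (f a).
Proof.
  intros H. apply (choice (fun a s => P a -> Q a s)). intros a.
  destruct (classic (P a)) as [Ha|Ha].
  - destruct (H a Ha) as [s Hs]. exists s. intros _. exact Hs.
  - exists 0. intros Ha'. contradiction.
Qed.

Lemma nat_floor (x : R) : 0 <= x -> exists i : nat, INR i <= x < INR i + 1.
Proof.
  intros Hx. pose proof (Zfloor_bound x) as Hb.
  assert (H0 : (0 <= Zfloor x)%Z) by (apply Zfloor_lub; simpl; lra).
  exists (Z.to_nat (Zfloor x)). rewrite INR_IZR_INZ, Z2Nat.id by exact H0. lra.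
Qed.

Lemma INR_mult_ge (x L : R) : 0 < L -> exists K : nat, forall n, (K <= n)%nat -> x <= INR n * L.
Proof.
  intros HL. destruct (INR_unbounded (x / L)) as [K HK]. exists K. intros n Hn.
  apply le_INR in Hn.
  replace x with (x / L * L) by (field; lra).
  apply Rmult_le_compat_r; lra.
Qed.

Definition clamp (l t : R) : R := Rmax 0 (Rmin t l).

Lemma clamp_in (l t : R) : 0 <= l -> 0 <= clamp l t <= l.
Proof. intros. unfold clamp, Rmax, Rmin. repeat destruct Rle_dec; lra. Qed.

Lemma clamp_id (l t : R) : 0 <= t <= l -> clamp l t = t.
Proof. intros. unfold clamp, Rmax, Rmin. repeat destruct Rle_dec; lra. Qed.

Lemma clamp_lipschitz (l s t : R) : Rabs (clamp l s - clamp l t) <= Rabs (s - t).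
Proof.
  unfold clamp, Rmax, Rmin. repeat destruct Rle_dec; unfold Rabs; repeat destruct Rcase_abs; lra.
Qed.

Lemma strict_incr_ge (tau : nat -> nat) : strict_incr tau -> forall k, (k <= tau k)%nat.
Proof. intros H k. induction k as [|k IH]; [lia|]. specialize (H k (S k) ltac:(lia)). lia. Qed.

Lemma strict_incr_succ (u : nat -> nat) : (forall k, (u k < u (S k))%nat) -> strict_incr u.
Proof. intros H m n Hmn. induction Hmn as [|n _ IH]; [apply H|]. specialize (H n). lia. Qed.

Lemma strict_incr_comp (phi psi : nat -> nat) :
  strict_incr phi -> strict_incr psi -> strict_incr (fun k => phi (psi k)).
Proof. intros Hphi Hpsi m n Hmn. apply Hphi, Hpsi, Hmn. Qed.

Definition nonneg_rational (j : nat) : R :=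
  INR (fst (Cantor.of_nat j)) / INR (S (snd (Cantor.of_nat j))).

Lemma nonneg_rational_dense (t e : R) : 0 <= t -> 0 < e ->
  exists j, Rabs (nonneg_rational j - t) <= e.
Proof.
  intros Ht He. destruct (INR_unbounded (/ e)) as [m Hm].
  set (k := INR (S m)).
  assert (Hk : / e < k) by (unfold k; rewrite S_INR; lra).
  assert (Hk0 : 0 < k) by (pose proof (Rinv_0_lt_compat e He); lra).
  assert (Hek : 1 <= e * k).
  { apply Rmult_lt_compat_l with (r := e) in Hk; [|exact He]. rewrite Rinv_r in Hk; lra. }
  destruct (nat_floor (t * k)) as [i Hi]; [apply Rmult_le_pos; lra|].
  exists (Cantor.to_nat (i, m)). unfold nonneg_rational. rewrite cancel_of_to. cbn [fst snd]. fold k.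
  replace (INR i / k - t) with (- ((t * k - INR i) / k)) by (field; lra).
  rewrite Rabs_Ropp, Rabs_right.
  - apply Rmult_le_reg_r with k; [exact Hk0|].
    unfold Rdiv. rewrite Rmult_assoc, Rinv_l by lra. lra.
  - apply Rle_ge, Rmult_le_pos; [lra|left; apply Rinv_0_lt_compat; exact Hk0].
Qed.

Section NestedExtraction.
Variable ext : (nat -> nat) * nat -> nat -> nat.
Hypothesis ext_incr : forall p, strict_incr (ext p).

Fixpoint nested_extraction (j : nat) : nat -> nat :=
  match j with
  | O => fun k => k
  | S j' => fun k => nested_extraction j' (ext (nested_extraction j', j') k)
  end.

Lemma nested_extraction_incr (j : nat) : strict_incr (nested_extraction j).
Proof.
  induction j as [|j IH]; intros m n Hmn; simpl; [exact Hmn|].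
  apply IH, ext_incr, Hmn.
Qed.

Lemma nested_extraction_tail (j d m : nat) :
  exists m', (m <= m')%nat /\ nested_extraction (j + d) m = nested_extraction j m'.
Proof.
  revert m. induction d as [|d IH]; intros m.
  - exists m. rewrite Nat.add_0_r. split; [lia|reflexivity].
  - rewrite Nat.add_succ_r. simpl.
    destruct (IH (ext (nested_extraction (j + d), (j + d)%nat) m)) as [m' [Hm' Heq]].
    exists m'. split; [|exact Heq].
    pose proof (strict_incr_ge _ (ext_incr (nested_extraction (j + d), (j + d)%nat)) m). lia.
Qed.

Lemma diagonal_extraction_incr : strict_incr (fun k => nested_extraction (S k) k).
Proof.
  apply strict_incr_succ. intros k.
  change (nested_extraction (S (S k)) (S k))
    with (nested_extraction (S k) (ext (nested_extraction (S k), S k) (S k))).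
  apply nested_extraction_incr.
  pose proof (strict_incr_ge _ (ext_incr (nested_extraction (S k), S k)) (S k)). lia.
Qed.

End NestedExtraction.

Section MorseGeometry.
Variable X : MetricSpace.

Lemma dist_refl (x : X) : dist x x = 0.
Proof. apply (dist_eq0 X). reflexivity. Qed.

Lemma dist_tri4 (x y z w : X) : dist x w <= dist x y + dist y z + dist z w.
Proof. pose proof (dist_tri X x y w). pose proof (dist_tri X y z w). lra. Qed.

Definition one_lipschitz (f : R -> X) : Prop := forall s t, dist (f s) (f t) <= Rabs (s - t).

Definition cauchy_seq (z : nat -> X) : Prop :=
  forall e, 0 < e -> exists K, forall a b, (K <= a)%nat -> (K <= b)%nat -> dist (z a) (z b) <= e.

Lemma seq_converges_cauchy (z : nat -> X) (l : X) : seq_converges X z l -> cauchy_seq z.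
Proof.
  intros H e He. destruct (H (e / 2) ltac:(lra)) as [K HK]. exists K. intros a b Ha Hb.
  pose proof (HK a Ha). pose proof (HK b Hb). pose proof (dist_tri X (z a) l (z b)).
  rewrite (dist_sym X l (z b)) in *. lra.
Qed.

Lemma finite_hausdorff_sym (I1 I2 : R -> Prop) (c1 c2 : R -> X) :
  finite_hausdorff X I1 c1 I2 c2 -> finite_hausdorff X I2 c2 I1 c1.
Proof.
  intros [C [H1 H2]]. exists C. split.
  - intros s Hs. destruct (H2 s Hs) as [t [Ht Hd]]. exists t. rewrite dist_sym. auto.
  - intros t Ht. destruct (H1 t Ht) as [s [Hs Hd]]. exists s. rewrite dist_sym. auto.
Qed.

Lemma finite_hausdorff_trans (I1 I2 I3 : R -> Prop) (c1 c2 c3 : R -> X) :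
  finite_hausdorff X I1 c1 I2 c2 -> finite_hausdorff X I2 c2 I3 c3 ->
  finite_hausdorff X I1 c1 I3 c3.
Proof.
  intros [C [H1 H2]] [C' [H1' H2']]. exists (C + C'). split.
  - intros s Hs. destruct (H1 s Hs) as [t [Ht Hd]]. destruct (H1' t Ht) as [u [Hu Hd']].
    exists u. split; [exact Hu|]. pose proof (dist_tri X (c1 s) (c2 t) (c3 u)). lra.
  - intros u Hu. destruct (H2' u Hu) as [t [Ht Hd]]. destruct (H2 t Ht) as [s [Hs Hd']].
    exists s. split; [exact Hs|]. pose proof (dist_tri X (c1 s) (c2 t) (c3 u)). lra.
Qed.

Lemma isometry_iter (g : X -> X) : isometry X g ->
  forall n a b, dist (Nat.iter n g a) (Nat.iter n g b) = dist a b.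
Proof. intros Hg n. induction n as [|n IH]; intros a b; simpl; [reflexivity|]. rewrite Hg. apply IH. Qed.

Lemma isometry_right_inverse (g ginv : X -> X) :
  isometry X g -> (forall x, g (ginv x) = x) -> isometry X ginv.
Proof. intros Hg Hinv a b. rewrite <- (Hg (ginv a) (ginv b)), !Hinv. reflexivity. Qed.

(** * Quasi-geodesics *)

Lemma quasi_geodesic_lower (lam eps : R) (I : R -> Prop) (q : R -> X) (s t : R) :
  quasi_geodesic_on X lam eps I q -> 1 <= lam -> I s -> I t ->
  Rabs (s - t) <= lam * (dist (q s) (q t) + eps).
Proof.
  intros Hq Hl Hs Ht. destruct (Hq s t Hs Ht) as [H _].
  replace (Rabs (s - t)) with (lam * (/ lam * Rabs (s - t))) by (field; lra).
  apply Rmult_le_compat_l; lra.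
Qed.

Lemma quasi_geodesic_upper (lam eps : R) (I : R -> Prop) (q : R -> X) (s t : R) :
  quasi_geodesic_on X lam eps I q -> I s -> I t -> dist (q s) (q t) <= lam * Rabs (s - t) + eps.
Proof. intros Hq Hs Ht. apply (Hq s t Hs Ht). Qed.

Lemma quasi_geodesic_of_bounds (lam eps : R) (I : R -> Prop) (q : R -> X) : 1 <= lam ->
  (forall s t, I s -> I t -> Rabs (s - t) <= lam * (dist (q s) (q t) + eps) /\
      dist (q s) (q t) <= lam * Rabs (s - t) + eps) ->
  quasi_geodesic_on X lam eps I q.
Proof.
  intros Hl H s t Hs Ht. destruct (H s t Hs Ht) as [H1 H2]. split; [|exact H2].
  replace (dist (q s) (q t)) with (/ lam * (lam * (dist (q s) (q t) + eps)) - eps) by (field; lra).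
  apply Rplus_le_compat_r, Rmult_le_compat_l; [left; apply Rinv_0_lt_compat; lra|exact H1].
Qed.

Lemma geodesic_quasi_geodesic (I : R -> Prop) (c : R -> X) :
  geodesic_on X I c -> quasi_geodesic_on X 1 0 I c.
Proof.
  intros Hc. apply quasi_geodesic_of_bounds; [lra|]. intros s t Hs Ht. rewrite (Hc s t Hs Ht). lra.
Qed.

Lemma quasi_geodesic_perturb (lam eps R0 : R) (I : R -> Prop) (q q' : R -> X) :
  1 <= lam -> quasi_geodesic_on X lam eps I q -> (forall u, I u -> dist (q' u) (q u) <= R0) ->
  quasi_geodesic_on X lam (eps + 2 * R0) I q'.
Proof.
  intros Hl Hq Hd. apply quasi_geodesic_of_bounds; [exact Hl|]. intros s t Hs Ht.
  pose proof (quasi_geodesic_lower _ _ _ _ _ _ Hq Hl Hs Ht).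
  pose proof (quasi_geodesic_upper _ _ _ _ _ _ Hq Hs Ht).
  pose proof (Hd s Hs). pose proof (Hd t Ht).
  pose proof (dist_tri4 (q s) (q' s) (q' t) (q t)). pose proof (dist_tri4 (q' s) (q s) (q t) (q' t)).
  rewrite (dist_sym X (q s) (q' s)), (dist_sym X (q t) (q' t)) in *.
  split; [|lra]. eapply Rle_trans; [eassumption|]. apply Rmult_le_compat_l; lra.
Qed.

Lemma quasi_geodesic_reverse (lam eps : R) (G : R -> X) :
  quasi_geodesic_on X lam eps whole_line G ->
  quasi_geodesic_on X lam eps whole_line (fun t => G (- t)).
Proof.
  intros H s t _ _. replace (Rabs (s - t)) with (Rabs (- s - - t)).
  - apply H; exact I.
  - rewrite <- Rabs_Ropp. f_equal. ring.
Qed.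

Lemma Morse_reverse (N : gauge) (G : R -> X) :
  is_N_Morse X N whole_line G -> is_N_Morse X N whole_line (fun t => G (- t)).
Proof.
  intros H lam eps a b q Hl He Hab Hq [s1 [_ H1]] [s2 [_ H2]] t Ht.
  destruct (H lam eps a b q Hl He Hab Hq (ex_intro _ (- s1) (conj I H1))
              (ex_intro _ (- s2) (conj I H2)) t Ht) as [s [_ Hs]].
  exists (- s). split; [exact I|]. rewrite Ropp_involutive. exact Hs.
Qed.

(* Moving the endpoints of [q] onto [c] costs [R0] at the endpoints only, which
   the quasi-geodesic constant absorbs. *)
Lemma Morse_near_endpoints (N : gauge) (I : R -> Prop) (c : R -> X)
    (lam eps R0 a b : R) (q : R -> X) (s1 s2 : R) :
  is_N_Morse X N I c -> 1 <= lam -> 0 <= eps -> 0 <= R0 -> a <= b ->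
  quasi_geodesic_on X lam eps (fun t => a <= t <= b) q -> I s1 -> I s2 ->
  dist (q a) (c s1) <= R0 -> dist (q b) (c s2) <= R0 ->
  forall t, a <= t <= b -> exists s, I s /\ dist (q t) (c s) <= Rmax 0 (N lam (eps + 2 * R0)) + R0.
Proof.
  intros HN Hl He HR Hab Hq Hs1 Hs2 Ha Hb t Ht.
  pose proof (Rmax_l 0 (N lam (eps + 2 * R0))).
  pose proof (Rmax_r 0 (N lam (eps + 2 * R0))).
  destruct (Req_dec a b) as [<-|Hne].
  { assert (t = a) as -> by lra. exists s1. split; [exact Hs1|lra]. }
  set (q' := fun u => if Req_EM_T u a then c s1 else if Req_EM_T u b then c s2 else q u).
  assert (Hclose : forall u, dist (q' u) (q u) <= R0).
  { intros u. unfold q'.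
    destruct (Req_EM_T u a) as [->|]; [rewrite dist_sym; exact Ha|].
    destruct (Req_EM_T u b) as [->|]; [rewrite dist_sym; exact Hb|].
    rewrite dist_refl. exact HR. }
  assert (Ha' : q' a = c s1) by (unfold q'; destruct (Req_EM_T a a); congruence).
  assert (Hb' : q' b = c s2).
  { unfold q'. destruct (Req_EM_T b a); [lra|]. destruct (Req_EM_T b b); congruence. }
  destruct (HN lam (eps + 2 * R0) a b q' Hl ltac:(lra) Hab
              (quasi_geodesic_perturb _ _ _ _ _ _ Hl Hq (fun u _ => Hclose u))
              (ex_intro _ s1 (conj Hs1 Ha')) (ex_intro _ s2 (conj Hs2 Hb')) t Ht) as [s [Hs Hd]].
  exists s. split; [exact Hs|].
  pose proof (Hclose t). pose proof (dist_tri X (q t) (q' t) (c s)).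
  rewrite (dist_sym X (q t) (q' t)) in *. lra.
Qed.


(* [J] bounds the jumps of a shadow at scale 1 and [T0] the parameter length of
   an excursion of the shadow beyond its endpoint values; see [shadow_le_endpoints]. *)
Definition shadow_bound (Lm E lam eps R0 : R) : R :=
  let J := Lm * (2 * R0 + lam + eps + E) in
  let T0 := lam * (2 * R0 + Lm * (2 * J) + E + eps) in
  Lm * (2 * R0 + E) + J + Lm * (2 * R0 + lam * T0 + eps + E).

Lemma shadow_bound_nonneg (Lm E lam eps R0 : R) :
  1 <= Lm -> 0 <= E -> 1 <= lam -> 0 <= eps -> 0 <= R0 -> 0 <= shadow_bound Lm E lam eps R0.
Proof.
  intros HLm HE Hlam Heps HR0. unfold shadow_bound. cbv zeta.
  set (J := Lm * (2 * R0 + lam + eps + E)).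
  assert (HJ : 0 <= J) by (apply Rmult_le_pos; lra).
  assert (HLJ : 0 <= Lm * (2 * J)) by (apply Rmult_le_pos; lra).
  set (T0 := lam * (2 * R0 + Lm * (2 * J) + E + eps)).
  assert (HT0 : 0 <= T0) by (apply Rmult_le_pos; lra).
  assert (HlT : 0 <= lam * T0) by (apply Rmult_le_pos; lra).
  assert (0 <= Lm * (2 * R0 + E)) by (apply Rmult_le_pos; lra).
  assert (0 <= Lm * (2 * R0 + lam * T0 + eps + E)) by (apply Rmult_le_pos; lra).
  lra.
Qed.

Section Shadow.
Variables (G : R -> X) (Lm E : R) (q : R -> X) (lam eps a b R0 : R) (sg : R -> R).
Hypotheses (HLm : 1 <= Lm) (HE : 0 <= E) (HG : quasi_geodesic_on X Lm E whole_line G).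
Hypotheses (Hlam : 1 <= lam) (Heps : 0 <= eps) (HR0 : 0 <= R0) (Hab : a <= b).
Hypothesis Hq : quasi_geodesic_on X lam eps (fun t => a <= t <= b) q.
Hypothesis Hsg : forall t, a <= t <= b -> dist (q t) (G (sg t)) <= R0.

Lemma shadow_diff (s s' : R) : a <= s <= b -> a <= s' <= b ->
  Rabs (sg s - sg s') <= Lm * (2 * R0 + lam * Rabs (s - s') + eps + E).
Proof.
  intros Hs Hs'.
  pose proof (quasi_geodesic_lower _ _ _ _ _ _ HG HLm I I : Rabs (sg s - sg s') <= _).
  pose proof (quasi_geodesic_upper _ _ _ _ _ _ Hq Hs Hs').
  pose proof (Hsg s Hs). pose proof (Hsg s' Hs').
  pose proof (dist_tri4 (G (sg s)) (q s) (q s') (G (sg s'))).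
  rewrite (dist_sym X (G (sg s)) (q s)) in *.
  eapply Rle_trans; [eassumption|]. apply Rmult_le_compat_l; lra.
Qed.

Lemma param_diff (s s' : R) : a <= s <= b -> a <= s' <= b ->
  Rabs (s - s') <= lam * (2 * R0 + Lm * Rabs (sg s - sg s') + E + eps).
Proof.
  intros Hs Hs'.
  pose proof (quasi_geodesic_lower _ _ _ _ _ _ Hq Hlam Hs Hs').
  pose proof (quasi_geodesic_upper _ _ _ _ _ _ HG I I : dist (G (sg s)) (G (sg s')) <= _).
  pose proof (Hsg s Hs). pose proof (Hsg s' Hs').
  pose proof (dist_tri4 (q s) (G (sg s)) (G (sg s')) (q s')).
  rewrite (dist_sym X (G (sg s')) (q s')) in *.
  eapply Rle_trans; [eassumption|]. apply Rmult_le_compat_l; lra.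
Qed.

Lemma shadow_coarsely_continuous :
  coarsely_continuous sg a b (Lm * (2 * R0 + lam + eps + E)).
Proof.
  intros s s' Hs Hs' Hss. eapply Rle_trans; [apply shadow_diff; assumption|].
  apply Rmult_le_compat_l; [lra|].
  assert (lam * Rabs (s - s') <= lam * 1) by (apply Rmult_le_compat_l; lra). lra.
Qed.

Lemma shadow_near_endpoint (u s : R) : a <= s <= b -> dist (q s) (G u) <= R0 ->
  Rabs (sg s - u) <= Lm * (2 * R0 + E).
Proof.
  intros Hs Hu.
  pose proof (quasi_geodesic_lower _ _ _ _ _ _ HG HLm I I : Rabs (sg s - u) <= _).
  pose proof (Hsg s Hs). pose proof (dist_tri X (G (sg s)) (q s) (G u)).
  rewrite (dist_sym X (G (sg s)) (q s)) in *.
  eapply Rle_trans; [eassumption|]. apply Rmult_le_compat_l; lra.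
Qed.

(* If [sg t] overshoots both endpoint shadows, the coarse intermediate value
   theorem gives [t1 <= t <= t2] whose shadows are both near [max (sg a) (sg b)];
   then [t2 - t1] is bounded, hence so is [sg t - sg t1]. *)
Lemma shadow_le_endpoints (u1 u2 : R) :
  dist (q a) (G u1) <= R0 -> dist (q b) (G u2) <= R0 ->
  forall t, a <= t <= b -> sg t <= Rmax u1 u2 + shadow_bound Lm E lam eps R0.
Proof.
  intros Ha Hb t Ht. unfold shadow_bound. cbv zeta.
  set (J := Lm * (2 * R0 + lam + eps + E)).
  set (T0 := lam * (2 * R0 + Lm * (2 * J) + E + eps)).
  assert (HJ : 0 <= J) by (apply Rmult_le_pos; lra).
  assert (HT0 : 0 <= T0) by (apply Rmult_le_pos; [lra|]; pose proof (Rmult_le_pos Lm (2 * J)); lra).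
  assert (HW : 0 <= Lm * (2 * R0 + lam * T0 + eps + E))
    by (apply Rmult_le_pos; [lra|]; pose proof (Rmult_le_pos lam T0); lra).
  pose proof (Rabs_le_between _ _ (shadow_near_endpoint u1 a ltac:(lra) Ha)).
  pose proof (Rabs_le_between _ _ (shadow_near_endpoint u2 b ltac:(lra) Hb)).
  pose proof (Rmax_l u1 u2). pose proof (Rmax_r u1 u2).
  set (m := Rmax (sg a) (sg b)).
  pose proof (Rmax_l (sg a) (sg b)). pose proof (Rmax_r (sg a) (sg b)). fold m in H3, H4.
  assert (Hm : m <= Rmax u1 u2 + Lm * (2 * R0 + E)) by (unfold m; apply Rmax_lub; lra).
  destruct (Rle_dec (sg t) m) as [Hle|Hgt]; [lra|].
  destruct (coarse_ivt sg a t J ltac:(lra)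
              (coarsely_continuous_sub sg a b a t J ltac:(lra) ltac:(lra) shadow_coarsely_continuous)
              m ltac:(lra)) as [t1 [Ht1 Ht1m]].
  destruct (coarse_ivt sg t b J ltac:(lra)
              (coarsely_continuous_sub sg a b t b J ltac:(lra) ltac:(lra) shadow_coarsely_continuous)
              m ltac:(lra)) as [t2 [Ht2 Ht2m]].
  apply Rabs_le_between in Ht1m. apply Rabs_le_between in Ht2m.
  assert (H12 : t2 - t1 <= T0).
  { pose proof (param_diff t2 t1 ltac:(lra) ltac:(lra)) as Hp.
    rewrite Rabs_right in Hp by lra.
    assert (Rabs (sg t2 - sg t1) <= 2 * J) by (apply Rabs_le; lra).
    assert (Lm * Rabs (sg t2 - sg t1) <= Lm * (2 * J)) by (apply Rmult_le_compat_l; lra).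
    eapply Rle_trans; [exact Hp|]. unfold T0. apply Rmult_le_compat_l; lra. }
  pose proof (shadow_diff t t1 ltac:(lra) ltac:(lra)) as Hd.
  rewrite Rabs_right with (r := t - t1) in Hd by lra.
  assert (lam * (t - t1) <= lam * T0) by (apply Rmult_le_compat_l; lra).
  assert (Hd' : sg t - sg t1 <= Lm * (2 * R0 + lam * T0 + eps + E)).
  { eapply Rle_trans; [apply Rle_abs|]. eapply Rle_trans; [exact Hd|].
    apply Rmult_le_compat_l; lra. }
  lra.
Qed.

End Shadow.

Lemma shadow_between_endpoints (G : R -> X) (Lm E : R) (q : R -> X) (lam eps a b R0 : R)
    (sg : R -> R) (u1 u2 : R) :
  1 <= Lm -> 0 <= E -> quasi_geodesic_on X Lm E whole_line G ->
  1 <= lam -> 0 <= eps -> 0 <= R0 -> a <= b ->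
  quasi_geodesic_on X lam eps (fun t => a <= t <= b) q ->
  (forall t, a <= t <= b -> dist (q t) (G (sg t)) <= R0) ->
  dist (q a) (G u1) <= R0 -> dist (q b) (G u2) <= R0 ->
  forall t, a <= t <= b ->
    Rmin u1 u2 - shadow_bound Lm E lam eps R0 <= sg t <= Rmax u1 u2 + shadow_bound Lm E lam eps R0.
Proof.
  intros HLm HE HG Hlam Heps HR0 Hab Hq Hsg Ha Hb t Ht. split.
  - assert (Hrev := shadow_le_endpoints (fun s => G (- s)) Lm E q lam eps a b R0 (fun s => - sg s)
                      HLm HE (quasi_geodesic_reverse _ _ _ HG) Hlam Heps HR0 Hab Hq).
    cbv beta in Hrev.
    specialize (Hrev ltac:(intros s Hs; rewrite Ropp_involutive; exact (Hsg s Hs)) (- u1) (- u2)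
                  ltac:(rewrite Ropp_involutive; exact Ha)
                  ltac:(rewrite Ropp_involutive; exact Hb) t Ht).
    assert (Rmax (- u1) (- u2) = - Rmin u1 u2)
      by (unfold Rmax, Rmin; destruct (Rle_dec (- u1) (- u2)), (Rle_dec u1 u2); lra).
    lra.
  - exact (shadow_le_endpoints G Lm E q lam eps a b R0 sg HLm HE HG Hlam Heps HR0 Hab Hq Hsg
             u1 u2 Ha Hb t Ht).
Qed.

(** * Compactness in proper spaces *)

Section Proper.
Hypothesis Hproper : proper_space X.

Lemma cauchy_bounded_converges (z : nat -> X) (x : X) (r : R) :
  (forall k, dist x (z k) <= r) -> cauchy_seq z -> exists l, seq_converges X z l.
Proof.
  intros Hb Hc. destruct (Hproper x r z Hb) as [phi [l [Hphi [_ Hl]]]]. exists l.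
  intros e He. destruct (Hc (e / 2) ltac:(lra)) as [K HK]. destruct (Hl (e / 2) ltac:(lra)) as [K' HK'].
  exists (max K K'). intros k Hk.
  pose proof (strict_incr_ge _ Hphi (max K K')).
  pose proof (HK k (phi (max K K')) ltac:(lia) ltac:(lia)).
  pose proof (HK' (max K K') ltac:(lia)).
  pose proof (dist_tri X (z k) (z (phi (max K K'))) l). lra.
Qed.

Lemma diagonal_subsequence (F : nat -> nat -> X) (x : X) (r : nat -> R) :
  (forall j k, dist x (F j k) <= r j) ->
  exists psi, strict_incr psi /\ forall j, exists l, seq_converges X (fun k => F j (psi k)) l.
Proof.
  intros Hb.
  assert (Hext : forall p : (nat -> nat) * nat, exists tau, strict_incr tau /\
            exists l, seq_converges X (fun k => F (snd p) (fst p (tau k))) l).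
  { intros [rh j]. destruct (Hproper x (r j) (fun k => F j (rh k)) (fun k => Hb _ _))
      as [tau [l [Htau [_ Hl]]]].
    exists tau. split; [exact Htau|]. exists l. exact Hl. }
  destruct (choice _ Hext) as [ext Hext'].
  assert (Hincr : forall p, strict_incr (ext p)) by (intros p; apply Hext').
  exists (fun k => nested_extraction ext (S k) k). split; [exact (diagonal_extraction_incr ext Hincr)|].
  intros j. destruct (proj2 (Hext' (nested_extraction ext j, j))) as [l Hl]. exists l.
  intros e He. destruct (Hl e He) as [K HK]. exists (max K j). intros k Hk.
  destruct (nested_extraction_tail ext Hincr (S j) (k - j) k) as [m [Hm Heq]].
  replace (S k) with (S j + (k - j))%nat by lia. rewrite Heq.
  apply (HK m). lia.
Qed.

(* Arzela-Ascoli: extract along the nonnegative rationals by a diagonal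
   argument, then extend to all [t >= 0] by equicontinuity. *)
Lemma lipschitz_pointwise_subsequence (f : nat -> R -> X) (x0 : X) :
  (forall k, one_lipschitz (f k)) -> (forall k, f k 0 = x0) ->
  exists psi gam, strict_incr psi /\
    forall t, 0 <= t -> seq_converges X (fun k => f (psi k) t) (gam t).
Proof.
  intros Hlip H0.
  assert (Hbd : forall k t, dist x0 (f k t) <= Rabs t).
  { intros k t. rewrite <- (H0 k). replace (Rabs t) with (Rabs (0 - t)); [apply Hlip|].
    rewrite Rminus_0_l, Rabs_Ropp. reflexivity. }
  destruct (diagonal_subsequence (fun j k => f k (nonneg_rational j)) x0
              (fun j => Rabs (nonneg_rational j)) (fun j k => Hbd _ _)) as [psi [Hpsi Hrat]].
  assert (Hcv : forall t, exists l, 0 <= t -> seq_converges X (fun k => f (psi k) t) l).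
  { intros t. destruct (Rle_dec 0 t) as [Ht|Ht]; [|exists x0; lra].
    destruct (cauchy_bounded_converges (fun k => f (psi k) t) x0 (Rabs t) (fun k => Hbd _ _))
      as [l Hl]; [|exists l; intros _; exact Hl].
    intros e He. destruct (nonneg_rational_dense t (e / 3) Ht ltac:(lra)) as [j Hj].
    destruct (Hrat j) as [l Hl].
    destruct (seq_converges_cauchy _ _ Hl (e / 3) ltac:(lra)) as [K HK].
    exists K. intros a b Ha Hb. pose proof (HK a b Ha Hb).
    pose proof (Hlip (psi a) t (nonneg_rational j)). pose proof (Hlip (psi b) (nonneg_rational j) t).
    pose proof (dist_tri4 (f (psi a) t) (f (psi a) (nonneg_rational j))
                  (f (psi b) (nonneg_rational j)) (f (psi b) t)).
    rewrite Rabs_minus_sym in Hj. rewrite (Rabs_minus_sym (nonneg_rational j) t) in *. lra. }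
  destruct (choice _ Hcv) as [gam Hgam].
  exists psi, gam. split; [exact Hpsi|exact Hgam].
Qed.

End Proper.

Lemma pointwise_limit_lipschitz (f : nat -> R -> X) (gam : R -> X) :
  (forall k, one_lipschitz (f k)) ->
  (forall t, 0 <= t -> seq_converges X (fun k => f k t) (gam t)) ->
  forall s t, 0 <= s -> 0 <= t -> dist (gam s) (gam t) <= Rabs (s - t).
Proof.
  intros Hl Hc s t Hs Ht. apply Rle_plus_epsilon. intros e He.
  destruct (Hc s Hs (e / 2) ltac:(lra)) as [K1 H1]. destruct (Hc t Ht (e / 2) ltac:(lra)) as [K2 H2].
  specialize (H1 (max K1 K2) ltac:(lia)). specialize (H2 (max K1 K2) ltac:(lia)).
  pose proof (Hl (max K1 K2) s t).
  pose proof (dist_tri4 (gam s) (f (max K1 K2) s) (f (max K1 K2) t) (gam t)).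
  rewrite (dist_sym X (gam s) (f (max K1 K2) s)) in *. lra.
Qed.

(* Pointwise convergence on a grid of mesh [e / 3], finitely many points below
   [T], upgrades to uniform convergence on [[0, T]] by equicontinuity. *)
Lemma pointwise_limit_uniform (f : nat -> R -> X) (gam : R -> X) :
  (forall k, one_lipschitz (f k)) ->
  (forall t, 0 <= t -> seq_converges X (fun k => f k t) (gam t)) ->
  forall T e, 0 < e -> exists K, forall k, (K <= k)%nat ->
    forall t, 0 <= t <= T -> dist (f k t) (gam t) <= e.
Proof.
  intros Hl Hc T e He. set (dl := e / 3).
  assert (Hdl : 0 < dl) by (unfold dl; lra).
  assert (Hgrid : forall m, exists K, forall i, (i <= m)%nat -> forall k, (K <= k)%nat ->
             dist (f k (INR i * dl)) (gam (INR i * dl)) <= dl).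
  { induction m as [|m [K HK]].
    - destruct (Hc (INR 0 * dl) ltac:(simpl; lra) dl Hdl) as [K HK]. exists K. intros i Hi k Hk.
      replace i with 0%nat by lia. apply HK, Hk.
    - destruct (Hc (INR (S m) * dl) ltac:(apply Rmult_le_pos; [apply pos_INR|lra]) dl Hdl) as [K' HK'].
      exists (max K K'). intros i Hi k Hk. destruct (Nat.eq_dec i (S m)) as [->|].
      + apply HK'. lia.
      + apply HK; lia. }
  destruct (INR_unbounded (T / dl)) as [m Hm].
  destruct (Hgrid m) as [K HK]. exists K. intros k Hk t Ht.
  destruct (nat_floor (t / dl)) as [i Hi].
  { apply Rmult_le_pos; [lra|left; apply Rinv_0_lt_compat; lra]. }
  assert (Htd : t / dl <= T / dl) by (apply Rmult_le_compat_r; [left; apply Rinv_0_lt_compat|]; lra).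
  assert (Him : (i < m)%nat) by (apply INR_lt; lra).
  assert (Hti : INR i * dl <= t <= INR i * dl + dl).
  { replace t with (t / dl * dl) by (field; lra).
    replace (INR i * dl + dl) with ((INR i + 1) * dl) by ring.
    split; apply Rmult_le_compat_r; lra. }
  assert (H0i : 0 <= INR i * dl) by (apply Rmult_le_pos; [apply pos_INR|lra]).
  pose proof (HK i ltac:(lia) k Hk).
  pose proof (Hl k t (INR i * dl)).
  pose proof (pointwise_limit_lipschitz f gam Hl Hc (INR i * dl) t H0i ltac:(lra)).
  pose proof (dist_tri4 (f k t) (f k (INR i * dl)) (gam (INR i * dl)) (gam t)).
  rewrite Rabs_right in H0 by lra. rewrite Rabs_left1 in H1 by lra.
  unfold dl in *. lra.
Qed.

(* Clamping the parameter extends each geodesic segment to a 1-Lipschitz map on [R]. *)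
Lemma geodesic_segments_total (Hgeod : geodesic_space X) (x : X) (y : nat -> X) :
  exists beta : nat -> R -> X, forall n,
    geodesic_on X (fun t => 0 <= t <= dist x (y n)) (beta n) /\
    beta n 0 = x /\ beta n (dist x (y n)) = y n /\ one_lipschitz (beta n).
Proof.
  destruct (choice (fun n c => geodesic_on X (fun t => 0 <= t <= dist x (y n)) c /\
                               c 0 = x /\ c (dist x (y n)) = y n)
              (fun n => Hgeod x (y n))) as [c Hc].
  exists (fun n t => c n (clamp (dist x (y n)) t)). intros n.
  destruct (Hc n) as [Hgeo [H0 H1]]. pose proof (dist_nonneg X x (y n)) as Hl.
  split; [|split; [|split]].
  - intros s t Hs Ht. rewrite !clamp_id by exact Hs || exact Ht. apply Hgeo; assumption.
  - rewrite clamp_id by lra. exact H0.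
  - rewrite clamp_id by lra. exact H1.
  - intros s t. rewrite Hgeo by (apply clamp_in; exact Hl). apply clamp_lipschitz.
Qed.

(** * Geodesics from a fixed point to an orbit along a Morse quasi-geodesic *)

Section FellowTraveller.
Variables (G : R -> X) (Lm E L D : R) (N : gauge) (y : nat -> X).
Hypotheses (HLm : 1 <= Lm) (HE : 0 <= E) (HG : quasi_geodesic_on X Lm E whole_line G).
Hypotheses (HN : is_N_Morse X N whole_line G) (HL : 0 < L).
Hypothesis HD : forall n, dist (y n) (G (INR n * L)) <= D.

Lemma orbit_gap_nonneg : 0 <= D.
Proof. pose proof (HD 0%nat). pose proof (dist_nonneg X (y 0%nat) (G (INR 0 * L))). lra. Qed.

Lemma base_dist_unbounded (T : R) : exists K, forall n, (K <= n)%nat -> T <= dist (G 0) (y n).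
Proof.
  destruct (INR_mult_ge (Lm * (T + E + D)) L HL) as [K HK]. exists K. intros n Hn.
  specialize (HK n Hn).
  pose proof (quasi_geodesic_lower _ _ _ _ _ _ HG HLm I I
                : Rabs (0 - INR n * L) <= Lm * (dist (G 0) (G (INR n * L)) + E)) as Hlow.
  rewrite Rminus_0_l, Rabs_Ropp in Hlow. pose proof (Rle_abs (INR n * L)).
  assert (T + E + D <= dist (G 0) (G (INR n * L)) + E) by (apply Rmult_le_reg_l with Lm; lra).
  pose proof (HD n). pose proof (dist_tri X (G 0) (y n) (G (INR n * L))). lra.
Qed.

Section Geodesics.
Variable beta : nat -> R -> X.
Hypothesis Hbeta : forall n,
  geodesic_on X (fun t => 0 <= t <= dist (G 0) (y n)) (beta n) /\
  beta n 0 = G 0 /\ beta n (dist (G 0) (y n)) = y n /\ one_lipschitz (beta n).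

Lemma beta_one_lipschitz (n : nat) : one_lipschitz (beta n).
Proof. apply Hbeta. Qed.

Lemma beta_shadow : exists (M : R) (sh : nat -> R -> R), D <= M /\
  forall n t, 0 <= t <= dist (G 0) (y n) -> dist (beta n t) (G (sh n t)) <= M.
Proof.
  pose proof orbit_gap_nonneg as HD0.
  exists (Rmax 0 (N 1 (0 + 2 * D)) + D).
  destruct (guarded_choice (nat * R) (fun p => 0 <= snd p <= dist (G 0) (y (fst p)))
              (fun p s => dist (beta (fst p) (snd p)) (G s) <= Rmax 0 (N 1 (0 + 2 * D)) + D))
    as [sh Hsh].
  - intros [n t] Ht. cbn in Ht |- *. destruct (Hbeta n) as [Hg [H0 [Hl _]]].
    destruct (Morse_near_endpoints N whole_line G 1 0 D 0 (dist (G 0) (y n)) (beta n) 0 (INR n * L)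
                HN ltac:(lra) ltac:(lra) HD0 (dist_nonneg X _ _) (geodesic_quasi_geodesic _ _ Hg) I I
                ltac:(rewrite H0, dist_refl; exact HD0) ltac:(rewrite Hl; apply HD) t Ht)
      as [s [_ Hs]].
    exists s. exact Hs.
  - exists (fun n t => sh (n, t)). split; [pose proof (Rmax_l 0 (N 1 (0 + 2 * D))); lra|].
    intros n t Ht. exact (Hsh (n, t) Ht).
Qed.

Section Shadowed.
Variables (M : R) (sh : nat -> R -> R).
Hypothesis HDM : D <= M.
Hypothesis Hsh : forall n t, 0 <= t <= dist (G 0) (y n) -> dist (beta n t) (G (sh n t)) <= M.

Lemma beta_endpoint_shadows (n : nat) :
  dist (beta n 0) (G 0) <= M /\ dist (beta n (dist (G 0) (y n))) (G (INR n * L)) <= M.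
Proof.
  pose proof orbit_gap_nonneg. destruct (Hbeta n) as [_ [-> [-> _]]].
  rewrite dist_refl. pose proof (HD n). lra.
Qed.

Lemma shadow_range (n : nat) (t : R) : 0 <= t <= dist (G 0) (y n) ->
  - shadow_bound Lm E 1 0 M <= sh n t <= INR n * L + shadow_bound Lm E 1 0 M.
Proof.
  intros Ht. destruct (Hbeta n) as [Hg _]. destruct (beta_endpoint_shadows n) as [H0 Hl].
  pose proof orbit_gap_nonneg.
  assert (HnL : 0 <= INR n * L) by (apply Rmult_le_pos; [apply pos_INR|lra]).
  pose proof (shadow_between_endpoints G Lm E (beta n) 1 0 0 (dist (G 0) (y n)) M (sh n) 0 (INR n * L)
                HLm HE HG ltac:(lra) ltac:(lra) ltac:(lra) (dist_nonneg X _ _)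
                (geodesic_quasi_geodesic _ _ Hg) (Hsh n) H0 Hl t Ht) as Hr.
  rewrite Rmin_left, Rmax_right in Hr by exact HnL. lra.
Qed.

Lemma G_near_beta_between_shadows (n : nat) (v : R) :
  sh n 0 <= v <= sh n (dist (G 0) (y n)) \/ sh n (dist (G 0) (y n)) <= v <= sh n 0 ->
  exists t, 0 <= t <= dist (G 0) (y n) /\
    dist (beta n t) (G v) <= M + Lm * (Lm * (2 * M + 1 + 0 + E)) + E.
Proof.
  intros Hv. destruct (Hbeta n) as [Hg _].
  destruct (coarse_ivt (sh n) 0 (dist (G 0) (y n)) (Lm * (2 * M + 1 + 0 + E)) (dist_nonneg X _ _)
              (shadow_coarsely_continuous G Lm E (beta n) 1 0 0 _ M (sh n) HLm HG (Rle_refl 1)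
                 (geodesic_quasi_geodesic _ _ Hg) (Hsh n))
              v Hv) as [t [Ht Htv]].
  exists t. split; [exact Ht|].
  pose proof (Hsh n t Ht).
  pose proof (quasi_geodesic_upper _ _ _ _ _ _ HG I I : dist (G (sh n t)) (G v) <= _).
  pose proof (dist_tri X (beta n t) (G (sh n t)) (G v)).
  assert (Lm * Rabs (sh n t - v) <= Lm * (Lm * (2 * M + 1 + 0 + E))) by (apply Rmult_le_compat_l; lra).
  lra.
Qed.

(* Beyond the shadows of its endpoints, [G v] is close to [G 0] or to [G (n L)]. *)
Lemma G_near_beta (K : R) : 0 <= K -> exists B, forall n v, - K <= v <= INR n * L + K ->
  exists t, 0 <= t <= dist (G 0) (y n) /\ dist (beta n t) (G v) <= B.
Proof.
  intros HK. pose proof orbit_gap_nonneg.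
  set (B0 := M + Lm * (Lm * (2 * M + 1 + 0 + E)) + E). set (c0 := Lm * (2 * M + E)).
  assert (Hc0 : 0 <= c0) by (apply Rmult_le_pos; lra).
  assert (HKc : 0 <= Lm * (K + c0)) by (apply Rmult_le_pos; lra).
  assert (HB0 : 0 <= B0) by (unfold B0; pose proof (Rmult_le_pos Lm (Lm * (2 * M + 1 + 0 + E)) ltac:(lra)
                                ltac:(apply Rmult_le_pos; lra)); lra).
  exists (B0 + D + Lm * (K + c0) + E). intros n v Hv.
  destruct (Hbeta n) as [_ [H0 [Hl _]]]. destruct (beta_endpoint_shadows n) as [Hs0 Hsl].
  set (l := dist (G 0) (y n)) in *. pose proof (dist_nonneg X (G 0) (y n)) as Hl0. fold l in Hl0.
  pose proof (Rabs_le_between _ _ (shadow_near_endpoint G Lm E (beta n) 0 l M (sh n)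
                HLm HG (Hsh n) 0 0 ltac:(lra) Hs0)) as Hc0l.
  pose proof (Rabs_le_between _ _ (shadow_near_endpoint G Lm E (beta n) 0 l M (sh n)
                HLm HG (Hsh n) (INR n * L) l ltac:(lra) Hsl)) as Hc0r.
  fold c0 in Hc0l, Hc0r.
  destruct (classic (sh n 0 <= v <= sh n l \/ sh n l <= v <= sh n 0)) as [Hin|Hout].
  { destruct (G_near_beta_between_shadows n v Hin) as [t [Ht Hd]].
    exists t. split; [exact Ht|]. fold B0 in Hd. lra. }
  apply not_or_and in Hout as [Ho1 Ho2]. apply not_and_or in Ho1. apply not_and_or in Ho2.
  assert (Hside : v < sh n 0 \/ v > sh n l) by lra.
  destruct Hside as [Hlow|Hhigh].
  - exists 0. split; [lra|]. rewrite H0.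
    pose proof (quasi_geodesic_upper _ _ _ _ _ _ HG I I : dist (G 0) (G v) <= _).
    assert (Lm * Rabs (0 - v) <= Lm * (K + c0)) by (apply Rmult_le_compat_l; [lra|apply Rabs_le; lra]).
    lra.
  - exists l. split; [lra|]. rewrite Hl.
    pose proof (quasi_geodesic_upper _ _ _ _ _ _ HG I I : dist (G (INR n * L)) (G v) <= _).
    assert (Lm * Rabs (INR n * L - v) <= Lm * (K + c0))
      by (apply Rmult_le_compat_l; [lra|apply Rabs_le; lra]).
    pose proof (HD n). pose proof (dist_tri X (y n) (G (INR n * L)) (G v)). lra.
Qed.

Lemma beta_Morse_bound (lam eps : R) : 1 <= lam -> 0 <= eps -> exists B, forall n a b q,
  a <= b -> quasi_geodesic_on X lam eps (fun t => a <= t <= b) q ->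
  (exists s, 0 <= s <= dist (G 0) (y n) /\ q a = beta n s) ->
  (exists s, 0 <= s <= dist (G 0) (y n) /\ q b = beta n s) ->
  forall t, a <= t <= b -> exists s, 0 <= s <= dist (G 0) (y n) /\ dist (q t) (beta n s) <= B.
Proof.
  intros Hlam Heps. pose proof orbit_gap_nonneg.
  set (R1 := Rmax 0 (N lam (eps + 2 * M)) + M).
  assert (HR1 : M <= R1) by (unfold R1; pose proof (Rmax_l 0 (N lam (eps + 2 * M))); lra).
  set (CA := shadow_bound Lm E 1 0 M). set (C := shadow_bound Lm E lam eps R1).
  assert (HCA : 0 <= CA) by (apply shadow_bound_nonneg; lra).
  assert (HC : 0 <= C) by (apply shadow_bound_nonneg; lra).
  destruct (G_near_beta (CA + C) ltac:(lra)) as [BK HBK].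
  exists (R1 + BK). intros n a b q Hab Hq [s1 [Hs1 Hqa]] [s2 [Hs2 Hqb]] t Ht.
  pose proof (Hsh n s1 Hs1) as Hu1. pose proof (Hsh n s2 Hs2) as Hu2.
  rewrite <- Hqa in Hu1. rewrite <- Hqb in Hu2.
  pose proof (shadow_range n s1 Hs1). pose proof (shadow_range n s2 Hs2). fold CA in H0, H1.
  destruct (guarded_choice R (fun u => a <= u <= b) (fun u s => dist (q u) (G s) <= R1)) as [sq Hsq].
  { intros u Hu.
    destruct (Morse_near_endpoints N whole_line G lam eps M a b q (sh n s1) (sh n s2)
                HN Hlam Heps ltac:(lra) Hab Hq I I Hu1 Hu2 u Hu) as [s [_ Hs]].
    exists s. exact Hs. }
  pose proof (shadow_between_endpoints G Lm E q lam eps a b R1 sq (sh n s1) (sh n s2)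
                HLm HE HG Hlam Heps ltac:(lra) Hab Hq Hsq ltac:(lra) ltac:(lra) t Ht) as Hr.
  fold C in Hr.
  assert (- CA <= Rmin (sh n s1) (sh n s2)) by (apply Rmin_glb; lra).
  assert (Rmax (sh n s1) (sh n s2) <= INR n * L + CA) by (apply Rmax_lub; lra).
  destruct (HBK n (sq t) ltac:(lra)) as [s [Hs Hsd]].
  exists s. split; [exact Hs|].
  pose proof (Hsq t Ht). pose proof (dist_tri X (q t) (G (sq t)) (beta n s)).
  rewrite (dist_sym X (G (sq t)) (beta n s)) in *. lra.
Qed.

Lemma beta_uniformly_Morse : exists Nb : gauge,
  forall n, is_N_Morse X Nb (fun t => 0 <= t <= dist (G 0) (y n)) (beta n).
Proof.
  destruct (guarded_choice (R * R) (fun p => 1 <= fst p /\ 0 <= snd p)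
              (fun p B => forall n a b q,
                 a <= b -> quasi_geodesic_on X (fst p) (snd p) (fun t => a <= t <= b) q ->
                 (exists s, 0 <= s <= dist (G 0) (y n) /\ q a = beta n s) ->
                 (exists s, 0 <= s <= dist (G 0) (y n) /\ q b = beta n s) ->
                 forall t, a <= t <= b ->
                   exists s, 0 <= s <= dist (G 0) (y n) /\ dist (q t) (beta n s) <= B))
    as [Nb HNb].
  - intros [lam eps] [Hlam Heps]. exact (beta_Morse_bound lam eps Hlam Heps).
  - exists (fun lam eps => Nb (lam, eps)).
    intros n lam eps a b q Hlam Heps Hab Hq Ha Hb t Ht.
    exact (HNb (lam, eps) (conj Hlam Heps) n a b q Hab Hq Ha Hb t Ht).
Qed.

Section Limit.
Variables (m : nat -> nat) (gam : R -> X).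
Hypothesis Hm : strict_incr m.
Hypothesis Hcv : forall t, 0 <= t -> seq_converges X (fun k => beta (m k) t) (gam t).

Lemma limit_lengths_unbounded (T : R) :
  exists K, forall k, (K <= k)%nat -> T <= dist (G 0) (y (m k)).
Proof.
  destruct (base_dist_unbounded T) as [K HK]. exists K. intros k Hk.
  apply HK. pose proof (strict_incr_ge m Hm k). lia.
Qed.

Lemma limit_base : gam 0 = G 0.
Proof.
  apply (dist_eq0 X), Rle_antisym; [|apply dist_nonneg]. apply Rle_plus_epsilon. intros e He.
  destruct (Hcv 0 (Rle_refl 0) e He) as [K HK]. specialize (HK K (Nat.le_refl K)).
  destruct (Hbeta (m K)) as [_ [H0 _]]. cbv beta in HK. rewrite H0, dist_sym in HK. lra.
Qed.

Lemma limit_geodesic_ray : geodesic_ray X gam.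
Proof.
  intros s t Hs Ht. unfold nonneg_half in Hs, Ht. apply Rle_antisym.
  - exact (pointwise_limit_lipschitz (fun k => beta (m k)) gam
             (fun k => beta_one_lipschitz (m k)) Hcv s t Hs Ht).
  - apply Rle_plus_epsilon. intros e He.
    destruct (Hcv s Hs (e / 2) ltac:(lra)) as [K1 H1]. destruct (Hcv t Ht (e / 2) ltac:(lra)) as [K2 H2].
    destruct (limit_lengths_unbounded (Rmax s t)) as [K3 H3].
    set (k := max K1 (max K2 K3)).
    specialize (H1 k ltac:(lia)). specialize (H2 k ltac:(lia)). specialize (H3 k ltac:(lia)).
    pose proof (Rmax_l s t). pose proof (Rmax_r s t).
    destruct (Hbeta (m k)) as [Hg _].
    pose proof (Hg s t ltac:(lra) ltac:(lra)) as Hd.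
    pose proof (dist_tri4 (beta (m k) s) (gam s) (gam t) (beta (m k) t)).
    rewrite (dist_sym X (beta (m k) s) (gam s)) in *. rewrite (dist_sym X (gam t) (beta (m k) t)) in *.
    cbv beta in H1, H2. lra.
Qed.

Lemma limit_uniform :
  unif_cvg_compacts X (fun k => beta (m k)) (fun k => dist (G 0) (y (m k))) gam.
Proof.
  intros T e He.
  destruct (pointwise_limit_uniform (fun k => beta (m k)) gam
              (fun k => beta_one_lipschitz (m k)) Hcv T e He) as [K1 H1].
  destruct (limit_lengths_unbounded T) as [K2 H2].
  exists (max K1 K2). intros k Hk. split; [apply H2; lia|]. intros t Ht. apply (H1 k); [lia|exact Ht].
Qed.

Lemma limit_near_G (t : R) : 0 <= t ->
  exists s, 0 <= s /\ dist (gam t) (G s) <= 1 + M + Lm * shadow_bound Lm E 1 0 M + E.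
Proof.
  intros Ht. set (CA := shadow_bound Lm E 1 0 M).
  assert (HCA : 0 <= CA) by (apply shadow_bound_nonneg; pose proof orbit_gap_nonneg; lra).
  destruct (Hcv t Ht 1 ltac:(lra)) as [K1 H1]. destruct (limit_lengths_unbounded t) as [K2 H2].
  set (k := max K1 K2). specialize (H1 k ltac:(lia)). specialize (H2 k ltac:(lia)).
  pose proof (Hsh (m k) t ltac:(lra)) as Hs. pose proof (shadow_range (m k) t ltac:(lra)) as Hr.
  fold CA in Hr. cbv beta in H1.
  pose proof (dist_tri X (gam t) (beta (m k) t) (G (sh (m k) t))).
  rewrite (dist_sym X (gam t) (beta (m k) t)) in *.
  destruct (Rle_dec 0 (sh (m k) t)) as [Hp|Hn].
  - exists (sh (m k) t). split; [exact Hp|]. assert (0 <= Lm * CA) by (apply Rmult_le_pos; lra). lra.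
  - exists 0. split; [lra|].
    pose proof (quasi_geodesic_upper _ _ _ _ _ _ HG I I : dist (G (sh (m k) t)) (G 0) <= _).
    rewrite Rminus_0_r, Rabs_left in H0 by lra.
    assert (Lm * - sh (m k) t <= Lm * CA) by (apply Rmult_le_compat_l; lra).
    pose proof (dist_tri X (gam t) (G (sh (m k) t)) (G 0)). lra.
Qed.

Lemma G_near_limit : exists B, forall s, 0 <= s -> exists t, 0 <= t /\ dist (gam t) (G s) <= B.
Proof.
  destruct (G_near_beta 0 (Rle_refl 0)) as [BK HBK]. exists (BK + 1). intros s Hs.
  set (T := Lm * s + E + BK).
  destruct (pointwise_limit_uniform (fun k => beta (m k)) gam
              (fun k => beta_one_lipschitz (m k)) Hcv T 1 ltac:(lra)) as [K1 H1].
  destruct (INR_mult_ge s L HL) as [K2 H2].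
  set (k := max K1 K2). set (n := m k).
  assert (Hn : s <= INR n * L) by (apply H2; pose proof (strict_incr_ge m Hm k); unfold n; lia).
  destruct (HBK n s ltac:(lra)) as [t [Ht Htd]].
  destruct (Hbeta n) as [Hg [H0 _]].
  assert (HtT : t <= T).
  { pose proof (Hg 0 t ltac:(lra) Ht) as Hd. rewrite H0, Rminus_0_l, Rabs_Ropp, Rabs_right in Hd by lra.
    pose proof (quasi_geodesic_upper _ _ _ _ _ _ HG I I : dist (G 0) (G s) <= _).
    rewrite Rminus_0_l, Rabs_Ropp, Rabs_right in H by lra.
    pose proof (dist_tri X (G 0) (G s) (beta n t)). rewrite (dist_sym X (G s)) in *.
    unfold T. lra. }
  exists t. split; [lra|].
  specialize (H1 k ltac:(lia) t ltac:(lra)). cbv beta in H1. fold n in H1.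
  pose proof (dist_tri X (gam t) (beta n t) (G s)) as Htri.
  rewrite (dist_sym X (gam t) (beta n t)) in Htri. lra.
Qed.

Lemma limit_fellow_travels : finite_hausdorff X nonneg_half gam nonneg_half G.
Proof.
  destruct G_near_limit as [B HB].
  set (B' := 1 + M + Lm * shadow_bound Lm E 1 0 M + E).
  exists (Rmax B' B). split.
  - intros t Ht. destruct (limit_near_G t Ht) as [s [Hs Hd]].
    exists s. split; [exact Hs|]. pose proof (Rmax_l B' B). unfold B' in *. lra.
  - intros s Hs. destruct (HB s Hs) as [t [Ht Hd]].
    exists t. split; [exact Ht|]. pose proof (Rmax_r B' B). lra.
Qed.

End Limit.
End Shadowed.
End Geodesics.

Lemma fellow_traveller_converges (Hproper : proper_space X) (Hgeod : geodesic_space X) (p : R -> X) :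
  finite_hausdorff X nonneg_half G nonneg_half p -> converges_to_boundary X y p.
Proof.
  intros Hp.
  destruct (geodesic_segments_total Hgeod (G 0) y) as [beta Hbeta].
  destruct (beta_shadow beta Hbeta) as [M [sh [HDM Hsh]]].
  destruct (beta_uniformly_Morse beta Hbeta M sh HDM Hsh) as [Nb HNb].
  exists (G 0), Nb, beta. split.
  - intros n. destruct (Hbeta n) as [Hg [H0 [Hl _]]]. exact (conj Hg (conj H0 (conj Hl (HNb n)))).
  - intros phi Hphi.
    destruct (lipschitz_pointwise_subsequence Hproper (fun k => beta (phi k)) (G 0)
                (fun k => beta_one_lipschitz beta Hbeta (phi k))
                (fun k => proj1 (proj2 (Hbeta (phi k))))) as [psi [gam [Hpsi Hcv]]].
    pose proof (strict_incr_comp phi psi Hphi Hpsi) as Hm.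
    exists psi, gam. split; [exact Hpsi|]. split; [exact (limit_geodesic_ray beta Hbeta _ gam Hm Hcv)|].
    split; [exact (limit_base beta Hbeta _ gam Hcv)|]. split.
    + exact (finite_hausdorff_trans _ _ _ _ _ _
               (limit_fellow_travels beta Hbeta M sh HDM Hsh _ gam Hm Hcv) Hp).
    + exact (limit_uniform beta Hbeta _ gam Hm Hcv).
Qed.

End FellowTraveller.

(** * The two ends of the axis *)

(* A point [c1 (- s)] near [c2] on the positive side would, by the half-line
   comparison, also be near [c1] on the positive side; that bounds [s]. *)
Lemma reverse_half_cover (lam eps C1 C2 : R) (c1 c2 : R -> X) :
  1 <= lam -> quasi_geodesic_on X lam eps whole_line c1 ->
  (forall s, exists t, dist (c1 s) (c2 t) <= C1) ->
  (forall t, 0 <= t -> exists s, 0 <= s /\ dist (c1 s) (c2 t) <= C2) ->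
  exists C, forall s, 0 <= s -> exists t, 0 <= t /\ dist (c1 (- s)) (c2 (- t)) <= C.
Proof.
  intros Hlam Hc1 Hw Hp.
  set (C' := lam * (lam * (C1 + C2 + eps)) + eps + dist (c1 0) (c2 0)).
  exists (Rmax C1 C'). pose proof (Rmax_l C1 C'). pose proof (Rmax_r C1 C'). intros s Hs.
  destruct (Hw (- s)) as [t0 Ht0].
  destruct (Rle_dec t0 0) as [Hneg|Hpos].
  - exists (- t0). split; [lra|]. rewrite Ropp_involutive. lra.
  - destruct (Hp t0 ltac:(lra)) as [u [Hu Hud]].
    pose proof (quasi_geodesic_lower _ _ _ _ _ _ Hc1 Hlam I I
                  : Rabs (- s - u) <= lam * (dist (c1 (- s)) (c1 u) + eps)) as Hlow.
    rewrite Rabs_left1 in Hlow by lra.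
    pose proof (dist_tri X (c1 (- s)) (c2 t0) (c1 u)). rewrite (dist_sym X (c2 t0) (c1 u)) in *.
    assert (Hsb : s <= lam * (C1 + C2 + eps)).
    { assert (lam * (dist (c1 (- s)) (c1 u) + eps) <= lam * (C1 + C2 + eps))
        by (apply Rmult_le_compat_l; lra). lra. }
    exists 0. split; [lra|]. rewrite Ropp_0.
    pose proof (quasi_geodesic_upper _ _ _ _ _ _ Hc1 I I : dist (c1 (- s)) (c1 0) <= _) as Hup.
    rewrite Rminus_0_r, Rabs_Ropp, Rabs_right in Hup by lra.
    assert (lam * s <= lam * (lam * (C1 + C2 + eps))) by (apply Rmult_le_compat_l; lra).
    pose proof (dist_tri X (c1 (- s)) (c1 0) (c2 0)).
    assert (dist (c1 (- s)) (c2 0) <= C') by (unfold C'; lra). lra.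
Qed.

Lemma finite_hausdorff_reverse_halves (lam1 eps1 lam2 eps2 : R) (c1 c2 : R -> X) :
  1 <= lam1 -> quasi_geodesic_on X lam1 eps1 whole_line c1 ->
  1 <= lam2 -> quasi_geodesic_on X lam2 eps2 whole_line c2 ->
  finite_hausdorff X whole_line c1 whole_line c2 ->
  finite_hausdorff X nonneg_half c1 nonneg_half c2 ->
  finite_hausdorff X nonneg_half (fun t => c1 (- t)) nonneg_half (fun t => c2 (- t)).
Proof.
  intros Hl1 Hq1 Hl2 Hq2 [C1 [Hw1 Hw2]] [C2 [Hp1 Hp2]].
  destruct (reverse_half_cover lam1 eps1 C1 C2 c1 c2 Hl1 Hq1) as [Ca HCa].
  { intros s. destruct (Hw1 s I) as [t [_ Ht]]. exists t. exact Ht. }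
  { exact Hp2. }
  destruct (reverse_half_cover lam2 eps2 C1 C2 c2 c1 Hl2 Hq2) as [Cb HCb].
  { intros s. destruct (Hw2 s I) as [t [_ Ht]]. exists t. rewrite dist_sym. exact Ht. }
  { intros t Ht. destruct (Hp1 t Ht) as [s [Hs Hd]]. exists s. rewrite dist_sym. exact (conj Hs Hd). }
  exists (Rmax Ca Cb). pose proof (Rmax_l Ca Cb). pose proof (Rmax_r Ca Cb). split.
  - intros s Hs. destruct (HCa s Hs) as [t [Ht Hd]]. exists t. split; [exact Ht|lra].
  - intros t Ht. destruct (HCb t Ht) as [s [Hs Hd]]. exists s. split; [exact Hs|].
    rewrite dist_sym. lra.
Qed.

(** * Orbits of a Morse isometry *)

Lemma zpow_of_nat (g ginv : X -> X) (n : nat) (x : X) : zpow X g ginv (Z.of_nat n) x = Nat.iter n g x.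
Proof. destruct n; [reflexivity|]. simpl. rewrite SuccNat2Pos.id_succ. reflexivity. Qed.

Lemma zpow_opp_of_nat (g ginv : X -> X) (n : nat) (x : X) :
  zpow X g ginv (- Z.of_nat n) x = Nat.iter n ginv x.
Proof. destruct n; [reflexivity|]. simpl. rewrite SuccNat2Pos.id_succ. reflexivity. Qed.

Section Orbits.
Variables (g ginv : X -> X) (x0 : X) (N : gauge) (c : Z -> R -> X) (Gam : R -> X).
Hypothesis Hconc : Morse_concatenation X g ginv x0 N c Gam.

Lemma concatenation_vertex (i : Z) : Gam (IZR i * dist x0 (g x0)) = zpow X g ginv i x0.
Proof.
  destruct Hconc as [HL [Hc [HGc _]]].
  rewrite <- (Rplus_0_r (IZR i * _)), HGc by lra. apply (Hc i).
Qed.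

Lemma forward_orbit_near_axis : isometry X g ->
  forall x n, dist (Nat.iter n g x) (Gam (INR n * dist x0 (g x0))) <= dist x x0.
Proof.
  intros Hg x n. rewrite INR_IZR_INZ, concatenation_vertex, zpow_of_nat, isometry_iter by exact Hg.
  apply Rle_refl.
Qed.

Lemma backward_orbit_near_axis : isometry X ginv ->
  forall x n, dist (Nat.iter n ginv x) (Gam (- (INR n * dist x0 (g x0)))) <= dist x x0.
Proof.
  intros Hginv x n.
  rewrite Ropp_mult_distr_l, INR_IZR_INZ, <- opp_IZR, concatenation_vertex, zpow_opp_of_nat,
    isometry_iter by exact Hginv.
  apply Rle_refl.
Qed.

End Orbits.

End MorseGeometry.

Theorem proposition6p12 (X : MetricSpace)
  (Hproper : proper_space X) (Hgeod : geodesic_space X)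
  (g ginv : X -> X) (Hiso : isometry X g)
  (Hinv1 : forall x, ginv (g x) = x) (Hinv2 : forall x, g (ginv x) = x)
  (HMorse : Morse_isometry X g ginv)
  (gp gm : R -> X) (Hpoles : poles X g ginv gp gm) :
  forall x : X,
    converges_to_boundary X (fun n => Nat.iter n g x) gp /\
    converges_to_boundary X (fun n => Nat.iter n ginv x) gm.
Proof.
  intros x.
  destruct Hpoles as (x0 & N & c & Gam & gam & Hconc & Hgam & _ & Hfw & Hfp & _ & Hgp & _ & Hgm).
  pose proof Hconc as (HL & _ & _ & (Lm & E & HLm & HE & HG) & HN).
  split.
  - apply (fellow_traveller_converges X Gam Lm E _ _ N _ HLm HE HG HN HL
             (forward_orbit_near_axis X g ginv x0 N c Gam Hconc Hiso x) Hproper Hgeod).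
    exact (finite_hausdorff_trans X _ _ _ _ _ _ (finite_hausdorff_sym X _ _ _ _ Hfp)
             (finite_hausdorff_sym X _ _ _ _ Hgp)).
  - apply (fellow_traveller_converges X (fun t => Gam (- t)) Lm E _ _ N _ HLm HE
             (quasi_geodesic_reverse X _ _ _ HG) (Morse_reverse X _ _ HN) HL
             (backward_orbit_near_axis X g ginv x0 N c Gam Hconc
                (isometry_right_inverse X g ginv Hiso Hinv2) x) Hproper Hgeod).
    pose proof (finite_hausdorff_reverse_halves X 1 0 Lm E gam Gam (Rle_refl 1)
                  (geodesic_quasi_geodesic X _ _ Hgam) HLm HG Hfw Hfp) as Hrev.
    exact (finite_hausdorff_trans X _ _ _ _ _ _ (finite_hausdorff_sym X _ _ _ _ Hrev)
             (finite_hausdorff_sym X _ _ _ _ Hgm)).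
Qed.
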